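(* Fix a positive integer $n$, $\delta>0$, $\eta_0\in(0,1)$, $\lambda>0$, and $\epsilon_{\text{cov}},\epsilon_{\text{rel}}\in(0,1)$. Let the transmittance be deterministic, $\eta=\eta_0$, and let $\overline{n}_B\sim\mathrm{Exp}(\lambda)$ (density $\lambda e^{-\lambda x}$, $x\ge0$). Consider the risk-constrained program \[ \max_{q,R}\; qR \quad\text{s.t.}\quad \mathbb{P}\!\left[q>\tfrac{2\delta}{\sqrt{n}}\,c_{\text{cov}}(\eta_0,\overline{n}_B)\right]\le\epsilon_{\text{cov}},\quad \mathbb{P}\!\left[R>R_{\text{ach}}(\eta_0,\overline{n}_B)\right]\le\epsilon_{\text{rel}},\quad 0\le q\le1,\ 0\le R\le1. \] Then its optimum is $(q^*,R^* )=(q_{\max},R_{\max})$ with \[ q_{\max}=\min\!\left\{1,\ \frac{2\delta}{\sqrt n}\,k\sqrt{\frac{Z^2-1}{4\eta_0}}\right\},\qquad R_{\max}=\Big[1-H\big(\vec p(\eta_0,-\tfrac1\lambda\ln\epsilon_{\text{rel}})\big)\Big]^+, \] where $k=\dfrac{\sqrt{2\eta_0}}{1-\eta_0}$ and $Z=1-\dfrac{2\eta_0}{\lambda}\ln(1-\epsilon_{\text{cov}})$.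
   Context: Definitions: for $\eta\in(0,1)$ and $\overline{n}_B\ge0$, $c_{\text{cov}}(\eta,\overline{n}_B)=\dfrac{\sqrt{2\eta\overline{n}_B(1+\eta\overline{n}_B)}}{1-\eta}$; $p(\eta,\overline{n}_B)=1-\dfrac{\eta}{[1+(1-\eta)\overline{n}_B]^4}$; $\vec p(\eta,\overline{n}_B)=(1-\tfrac{3p}{4},\tfrac p4,\tfrac p4,\tfrac p4)$; $H(\vec p)=-\sum_i p_i\log_2p_i$ (with $0\log0=0$); $R_{\text{ach}}(\eta,\overline{n}_B)=(1-H(\vec p(\eta,\overline{n}_B)))^+$ with $(x)^+=\max(x,0)$. Probabilities are over the randomness of $\overline{n}_B$. *)

From HB Require Import structures.
From mathcomp Require Import all_boot all_order all_algebra.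
From mathcomp Require Import all_classical all_reals all_analysis.
Set Implicit Arguments. Unset Strict Implicit. Unset Printing Implicit Defensive.
Import Order.TTheory GRing.Theory Num.Theory.
Local Open Scope ring_scope.

Section defs.
Variable R : realType.

Definition c_cov (eta nB : R) : R :=
  Num.sqrt (2 * eta * nB * (1 + eta * nB)) / (1 - eta).

Definition p_dep (eta nB : R) : R := 1 - eta / (1 + (1 - eta) * nB) ^+ 4.

Definition pvec (eta nB : R) : seq R :=
  let p := p_dep eta nB in [:: 1 - 3 * p / 4; p / 4; p / 4; p / 4].

Definition xlog2x (x : R) : R := if x == 0 then 0 else x * (ln x / ln 2).

Definition entropy (s : seq R) : R := - \sum_(x <- s) xlog2x x.

Definition R_ach (eta nB : R) : R := Num.max (1 - entropy (pvec eta nB)) 0.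
End defs.

(* Each constraint
   reads P[f(nB) < level] <= eps with f monotone and continuous on [0, +oo[:
   c_cov eta0 increases with nB, while R_ach eta0 decreases with nB, because the
   depolarizing probability p grows with nB and the entropy of
   (1 - 3p/4, p/4, p/4, p/4) grows with p on ]0, 1] (convexity of x log x).
   By monotonicity the constraint holds when the level is at most the value of f
   at the relevant quantile of nB, and by continuity it fails for any larger
   level.  These quantiles are t* = -ln(1 - eps_cov)/lam, for which the paper's
   Z is 1 + 2 eta0 t*, and -ln(eps_rel)/lam.  The feasible set is therefore the
   rectangle [0, q_max] x [0, R_max], and qR is maximal at its corner. *)

From HB Require Import structures.
From mathcomp Require Import all_boot all_order all_algebra.
From mathcomp Require Import all_classical all_reals all_analysis.
From mathcomp Require Import ring lra measurable_realfun.
Import Order.TTheory GRing.Theory Num.Theory numFieldNormedType.Exports.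
Set Implicit Arguments. Unset Strict Implicit.
Local Open Scope ring_scope.

Section near_witnesses.
Variable R : realType.

Lemma near_exists_gt (P : R -> Prop) (t : R) :
  (\forall x \near t, P x) -> exists2 x, t < x & P x.
Proof.
move=> /nbhs_ballP[e /= e0 Pe]; exists (t + e / 2); first lra.
by apply: Pe; rewrite /ball /= opprD addNKr normrN gtr0_norm; lra.
Qed.

Lemma near_exists_between (P : R -> Prop) (a t : R) : a < t ->
  (\forall x \near t, P x) -> exists2 x, a < x < t & P x.
Proof.
move=> lt_at /nbhs_ballP[e /= e0 Pe].
have d0 : 0 < Num.min e (t - a) by rewrite lt_min e0 subr_gt0.
have de : Num.min e (t - a) <= e by rewrite ge_min lexx.
have da : Num.min e (t - a) <= t - a by rewrite ge_min lexx orbT.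
exists (t - Num.min e (t - a) / 2); first by apply/andP; split; lra.
by apply: Pe; rewrite /ball /= opprB addrC subrK gtr0_norm; lra.
Qed.
End near_witnesses.

Section exponential_law.
Local Open Scope classical_set_scope.
Variables (R : realType) (lam : R).
Hypothesis lam_gt0 : 0 < lam.
Local Notation P := (exponential_prob lam).

Let pdf_ge0 x : (0 <= (exponential_pdf lam x)%:E)%E.
Proof. by rewrite lee_fin exponential_pdf_ge0 // ltW. Qed.

Lemma exponential_prob_ge0 (A : set R) : (0 <= P A)%E.
Proof. exact: integral_ge0. Qed.

(* The events need not be measurable, so the integrals are compared through
   their defining suprema over simple functions. *)
Lemma exponential_prob_le (A B : set R) :
  (forall x, 0 <= x -> A x -> B x) -> (P A <= P B)%E.
Proof.
move=> AB; rewrite /exponential_prob [leLHS]integral_mkcond [leRHS]integral_mkcond.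
rewrite !ge0_integralTE => [|x|x]; rewrite ?patchE; try by case: ifP.
apply: ereal_sup_le => _ [h /= hA <-]; exists h => //= x.
apply: le_trans (hA x) _; rewrite !patchE.
have [x0|x0] := ltP x 0; first by rewrite lt0_exponential_pdf //; do 2 case: ifP.
case: (boolP (x \in A)) => [|_]; last by case: ifP.
by rewrite !inE => /(AB _ x0) Bx; rewrite mem_set.
Qed.

Lemma exponential_prob_setC (A : set R) : measurable A -> (P A + P (~` A))%E = 1%E.
Proof.
move=> mA; rewrite /exponential_prob -ge0_integral_setU //.
- by rewrite setUv; exact: integral_exponential_pdf.
- exact: measurableC.
- by rewrite setUv; apply/measurable_EFinP; exact: measurable_exponential_pdf.
- exact/disj_setPCl.
Qed.

Lemma exponential_prob_itvoy (t : R) : 0 < t -> P `]t, +oo[ = (expR (- lam * t))%:E.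
Proof.
move=> t0.
have lower : P `]-oo, t] = P `[0, t].
  apply/eqP; rewrite eq_le !exponential_prob_le // => x x0 /=; rewrite !in_itv /=.
    by case/andP.
  by move=> ->; rewrite x0.
have := exponential_prob_setC (@measurable_itv _ `]-oo, t]%R).
rewrite lower exponential_prob_itv0c // setCitvl.
case: (P `]t, +oo[) (exponential_prob_ge0 `]t, +oo[) => [b _| |] //=.
by rewrite -EFinB -EFinD => -[] ?; congr EFin; lra.
Qed.

Lemma exponential_prob_sublevel_nondecreasing (f : R -> R) (t q : R) : 0 < t ->
  {in Num.nneg &, {homo f : x y / x <= y}} -> {for t, continuous f} ->
  (P [set x | (f x < q)%R] <= (1 - expR (- lam * t))%:E)%E <-> q <= f t.
Proof.
move=> t0 f_mono f_cont; split => [Pq|qf].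
- rewrite leNgt; apply/negP => /(cvgr_lt _ f_cont) /near_exists_gt[t1 tt1 ft1].
  have : (P `[0%R, t1] <= P [set x | (f x < q)%R])%E.
    apply: exponential_prob_le => x x0 /=; rewrite in_itv /= x0 /= => xt1.
    by apply: le_lt_trans ft1; apply: f_mono; rewrite ?nnegrE //; lra.
  move=> /le_trans /(_ Pq); rewrite exponential_prob_itv0c ?(lt_trans t0) //.
  have : expR (- lam * t1) < expR (- lam * t) by rewrite ltr_expR !mulNr ltrN2 ltr_pM2l.
  rewrite lee_fin; lra.
- rewrite EFinB -exponential_prob_itv0c //; apply: exponential_prob_le => x x0 /= fxq.
  rewrite in_itv /= x0 leNgt; apply/negP => tx.
  have := f_mono t x; rewrite !nnegrE x0 (ltW t0) => /(_ isT isT (ltW tx)); lra.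
Qed.

Lemma exponential_prob_sublevel_nonincreasing (g : R -> R) (s r : R) : 0 < s ->
  {in Num.nneg &, {homo g : x y /~ x <= y}} -> {for s, continuous g} ->
  (P [set x | (g x < r)%R] <= (expR (- lam * s))%:E)%E <-> r <= g s.
Proof.
move=> s0 g_mono g_cont; split => [Pr|rg].
- rewrite leNgt; apply/negP.
  move=> /(cvgr_lt _ g_cont) /(near_exists_between s0)[t /andP[t0 ts] gt].
  have : (P `]t, +oo[%classic <= P [set x | (g x < r)%R])%E.
    apply: exponential_prob_le => x x0; rewrite /= in_itv /= andbT => tx.
    by apply: le_lt_trans gt; apply: g_mono; rewrite ?nnegrE ?x0 ?(ltW t0) // ltW.
  move=> /le_trans /(_ Pr); rewrite exponential_prob_itvoy //.
  rewrite lee_fin ler_expR !mulNr lerN2 ler_pM2l //; lra.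
- rewrite -exponential_prob_itvoy //; apply: exponential_prob_le => x x0 /= gxr.
  rewrite in_itv /= andbT ltNge; apply/negP => xs.
  have := g_mono s x; rewrite !nnegrE x0 (ltW s0) => /(_ isT isT xs); lra.
Qed.

Lemma exponential_tail_level u : 0 < u < 1 ->
  0 < - lam^-1 * ln u /\ expR (- lam * (- lam^-1 * ln u)) = u.
Proof.
move=> /andP[u0 u1]; split.
  by rewrite mulNr -mulrN mulr_gt0 ?invr_gt0 // oppr_gt0 ln_lt0 ?u0.
by rewrite mulrA mulrNN mulfV ?gt_eqF // mul1r lnK ?posrE.
Qed.

End exponential_law.

Section entropy.
Variable R : realType.
Implicit Types eta p q x y : R.

Lemma ln_le_subr1 x : 0 < x -> ln x <= x - 1.
Proof. by move=> x0; have := @le_ln1Dx R (x - 1); rewrite subrKC; apply; lra. Qed.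

Lemma continuous_xlog2x x : 0 < x -> {for x, continuous (@xlog2x R)}.
Proof.
move=> x0; have near_log : \forall y \near x, y * (ln y / ln 2) = xlog2x y.
  by near=> y; rewrite /xlog2x gt_eqF //; near: y; exact: lt_nbhsr.
apply: cvg_trans (near_eq_cvg near_log) _; rewrite {1}/xlog2x gt_eqF //.
apply: cvgM; first exact: cvg_id.
by apply: cvgM; [exact: continuous_ln | exact: cvg_cst].
Unshelve. all: by end_near.
Qed.

Lemma xlog2x_le0 x : 0 <= x <= 1 -> xlog2x x <= 0.
Proof.
move=> /andP[x0 x1]; rewrite /xlog2x; case: eqP => // _.
by rewrite mulr_ge0_le0 // pmulr_lle0 ?invr_gt0 ?ln_gt0 ?ln_le0 //; lra.
Qed.

Lemma xlog2x_tangent x y : 0 < x -> 0 < y ->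
  xlog2x y + (ln y + 1) / ln 2 * (x - y) <= xlog2x x.
Proof.
move=> x0 y0; rewrite /xlog2x !gt_eqF // -subr_ge0.
have ln2_gt0 : 0 < ln (2 : R) by apply: ln_gt0; lra.
have key : x * (ln y - ln x) <= y - x.
  have : ln (y / x) <= y / x - 1 by apply/ln_le_subr1/divr_gt0.
  rewrite ln_div ?posrE // -(ler_pM2l x0).
  by have -> : x * (y / x - 1) = y - x by field; rewrite gt_eqF.
have -> : x * (ln x / ln 2) - (y * (ln y / ln 2) + (ln y + 1) / ln 2 * (x - y)) =
          (y - x - x * (ln y - ln x)) / ln 2 by field; rewrite gt_eqF.
by apply: divr_ge0; lra.
Qed.

Definition depol_entropy p := - (xlog2x (1 - 3 * p / 4) + 3 * xlog2x (p / 4)).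

Lemma entropy_pvec eta x : entropy (pvec eta x) = depol_entropy (p_dep eta x).
Proof. by rewrite /entropy /depol_entropy !big_cons big_nil; ring. Qed.

Lemma depol_entropy_ge0 p : 0 <= p <= 4 / 3 -> 0 <= depol_entropy p.
Proof.
move=> /andP[p0 p43]; rewrite /depol_entropy oppr_ge0.
have := @xlog2x_le0 (1 - 3 * p / 4); have := @xlog2x_le0 (p / 4); lra.
Qed.

Lemma depol_entropy_nondecreasing :
  {in `]0, 1] &, {homo depol_entropy : p q / p <= q}}.
Proof.
move=> p q; rewrite !in_itv /= => /andP[p0 p1] /andP[q0 q1] pq.
have ln2_gt0 : 0 < ln (2 : R) by apply: ln_gt0; lra.
have ta := @xlog2x_tangent (1 - 3 * p / 4) (1 - 3 * q / 4) ltac:(lra) ltac:(lra).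
have tb := @xlog2x_tangent (p / 4) (q / 4) ltac:(lra) ltac:(lra).
have lnq : ln (q / 4) <= ln (1 - 3 * q / 4) by rewrite ler_ln ?posrE; lra.
have : 0 <= (ln (1 - 3 * q / 4) - ln (q / 4)) / ln 2 * (q - p).
  by apply: mulr_ge0; [apply: divr_ge0|]; lra.
rewrite /depol_entropy; move: ta tb.
set A := (ln (1 - 3 * q / 4) + 1) / ln 2; set B := (ln (q / 4) + 1) / ln 2.
have -> : (ln (1 - 3 * q / 4) - ln (q / 4)) / ln 2 = A - B.
  by rewrite /A /B; field; rewrite gt_eqF.
lra.
Qed.

Lemma continuous_depol_entropy p : 0 < p < 4 / 3 -> {for p, continuous depol_entropy}.
Proof.
move=> /andP[p0 p43]; apply: cvgN; apply: cvgD.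
  apply: (@continuous_comp _ _ _ (fun q => 1 - 3 * q / 4) (@xlog2x R)).
    by apply: cvgB; [|apply: cvgM; [apply: cvgM|]]; exact: cvg_cst || exact: cvg_id.
  by apply: continuous_xlog2x; lra.
apply: cvgM; first exact: cvg_cst.
apply: (@continuous_comp _ _ _ (fun q => q / 4) (@xlog2x R)).
  by apply: cvgM; [exact: cvg_id | exact: cvg_cst].
by apply: continuous_xlog2x; lra.
Qed.

End entropy.

Section channel.
Variable R : realType.
Implicit Types eta s t x y : R.

Lemma c_cov_ge0 eta t : eta < 1 -> 0 <= c_cov eta t.
Proof. by move=> e1; rewrite divr_ge0 ?sqrtr_ge0 // subr_ge0 ltW. Qed.

Lemma c_cov_nondecreasing eta : 0 <= eta < 1 ->
  {in Num.nneg &, {homo c_cov eta : x y / x <= y}}.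
Proof.
move=> /andP[e0 e1] x y; rewrite !nnegrE => x0 y0 xy.
rewrite /c_cov ler_wpM2r ?invr_ge0 ?subr_ge0 ?(ltW e1) //; apply: ler_wsqrtr.
have exy : eta * x <= eta * y by rewrite ler_wpM2l.
have ex0 : 0 <= eta * x by rewrite mulr_ge0.
nra.
Qed.

Lemma c_covE eta t : 0 < eta ->
  c_cov eta t = Num.sqrt (2 * eta) / (1 - eta) *
                Num.sqrt (((1 + 2 * eta * t) ^+ 2 - 1) / (4 * eta)).
Proof.
move=> e0; rewrite /c_cov [RHS]mulrAC -sqrtrM; last lra.
by congr (Num.sqrt _ / _); field; rewrite gt_eqF.
Qed.

Lemma continuous_c_cov eta : continuous (c_cov eta).
Proof.
move=> x; apply: cvgM; last exact: cvg_cst.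
apply: continuous_comp; last exact: sqrt_continuous.
by repeat (apply: cvgM || apply: cvgD); exact: cvg_cst || exact: cvg_id.
Qed.

Lemma p_dep_nondecreasing eta : 0 <= eta <= 1 ->
  {in Num.nneg &, {homo p_dep eta : x y / x <= y}}.
Proof.
move=> /andP[e0 e1] x y; rewrite !nnegrE => x0 y0 xy.
have Dx : 1 <= 1 + (1 - eta) * x by rewrite lerDl mulr_ge0 // subr_ge0.
have Dxy : 1 + (1 - eta) * x <= 1 + (1 - eta) * y by rewrite lerD2l ler_wpM2l // subr_ge0.
have Dy := le_trans Dx Dxy.
rewrite /p_dep lerD2l lerN2 ler_wpM2l // lef_pV2 ?posrE ?exprn_gt0 ?(lt_le_trans ltr01) //.
by apply: lerXn2r; rewrite // nnegrE (le_trans ler01).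
Qed.

Lemma continuous_p_dep eta x : 1 + (1 - eta) * x != 0 ->
  {for x, continuous (p_dep eta)}.
Proof.
move=> nz; apply: cvgB; first exact: cvg_cst.
apply: cvgM; first exact: cvg_cst.
apply: cvgV; first by rewrite expf_neq0.
apply: (@continuous_comp _ _ _ (fun y => 1 + (1 - eta) * y) (fun z => z ^+ 4)).
  by repeat (apply: cvgM || apply: cvgD); exact: cvg_cst || exact: cvg_id.
exact: exprn_continuous.
Qed.

Lemma p_dep_itv eta x : 0 < eta < 1 -> 0 <= x -> p_dep eta x \in `]0, 1].
Proof.
move=> /andP[e0 e1] x0; rewrite in_itv /= /p_dep.
set D := 1 + (1 - eta) * x.
have D1 : 1 <= D by rewrite lerDl mulr_ge0 // subr_ge0 ltW.
have D0 : 0 < D := lt_le_trans ltr01 D1.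
have u0 : 0 < (D ^+ 4)^-1 by rewrite invr_gt0 exprn_gt0.
have u1 : (D ^+ 4)^-1 <= 1 by rewrite invf_le1 ?exprn_ege1 ?exprn_gt0.
apply/andP; split; nra.
Qed.

Lemma R_achE eta x : R_ach eta x = Num.max (1 - depol_entropy (p_dep eta x)) 0.
Proof. by rewrite /R_ach entropy_pvec. Qed.

Lemma R_ach_le1 eta x : 0 < eta < 1 -> 0 <= x -> R_ach eta x <= 1.
Proof.
move=> eta01 x0; have := p_dep_itv eta01 x0; rewrite in_itv /= => /andP[p0 p1].
rewrite R_achE ge_max ler01 andbT lerBlDr lerDl depol_entropy_ge0 //; lra.
Qed.

Lemma R_ach_nonincreasing eta : 0 < eta < 1 ->
  {in Num.nneg &, {homo R_ach eta : x y /~ x <= y}}.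
Proof.
move=> eta01 x y; rewrite !nnegrE => x0 y0 yx.
have eta01' : 0 <= eta <= 1 by case/andP: eta01 => e0 e1; rewrite !ltW.
rewrite !R_achE le_max2 // lerD2l lerN2.
apply: depol_entropy_nondecreasing; rewrite ?p_dep_itv //.
by apply: p_dep_nondecreasing; rewrite ?nnegrE.
Qed.

Lemma continuous_R_ach eta s : 0 < eta < 1 -> 0 <= s -> {for s, continuous (R_ach eta)}.
Proof.
move=> /andP[e0 e1] s0; have := @p_dep_itv eta s; rewrite in_itv /= e0 e1 => /(_ isT s0).
move=> /andP[p0 p1].
have p_cont : {for s, continuous (p_dep eta)}.
  have : 0 <= (1 - eta) * s by rewrite mulr_ge0 // subr_ge0 ltW.
  by move=> ?; apply: continuous_p_dep; rewrite gt_eqF //; lra.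
have H_cont : {for p_dep eta s, continuous (@depol_entropy R)}.
  by apply: continuous_depol_entropy; rewrite p0 /=; lra.
have rate_cont : {for s, continuous (fun x => 1 - depol_entropy (p_dep eta x))}.
  by apply: cvgB; [exact: cvg_cst | exact: continuous_comp p_cont H_cont].
have -> : R_ach eta = (fun x => 1 - depol_entropy (p_dep eta x)) \max (fun=> 0).
  by apply/funext => x; rewrite R_achE.
exact: (continuous_max rate_cont (cvg_cst _)).
Qed.

End channel.

Section constraints.
Local Open Scope classical_set_scope.
Variables (R : realType) (lam : R).
Hypothesis lam_gt0 : 0 < lam.
Local Notation P := (exponential_prob lam).

Lemma exponential_c_cov_sublevelP (a eta t q : R) : 0 < a -> 0 < eta < 1 -> 0 < t ->
  (P [set x | (a * c_cov eta x < q)%R] <= (1 - expR (- lam * t))%:E)%E <->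
  q <= a * c_cov eta t.
Proof.
move=> a_gt0 /andP[e0 e1] t0.
apply: (@exponential_prob_sublevel_nondecreasing _ _ lam_gt0 (fun x => a * c_cov eta x)) => //.
  move=> x y x0 y0 xy; rewrite ler_wpM2l ?(ltW a_gt0) //.
  by apply: c_cov_nondecreasing x0 y0 xy; rewrite (ltW e0).
by apply: cvgM; [exact: cvg_cst | exact: continuous_c_cov].
Qed.

Lemma exponential_R_ach_sublevelP (eta s r : R) : 0 < eta < 1 -> 0 < s ->
  (P [set x | (R_ach eta x < r)%R] <= (expR (- lam * s))%:E)%E <-> r <= R_ach eta s.
Proof.
move=> eta01 s0; apply: exponential_prob_sublevel_nonincreasing => //.
  exact: R_ach_nonincreasing.
exact/continuous_R_ach/ltW.
Qed.

End constraints.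

Local Open Scope classical_set_scope.

Theorem lemma1 (R : realType) (n : nat) (delta eta0 lam eps_cov eps_rel : R) :
  (0 < n)%N -> 0 < delta -> 0 < eta0 < 1 -> 0 < lam ->
  0 < eps_cov < 1 -> 0 < eps_rel < 1 ->
  let P := exponential_prob lam in
  let feasible (q r : R) :=
    [/\ (P [set nB : R | (q > 2 * delta / Num.sqrt n%:R * c_cov eta0 nB)%R] <= eps_cov%:E)%E,
        (P [set nB : R | (r > R_ach eta0 nB)%R] <= eps_rel%:E)%E,
        0 <= q <= 1 & 0 <= r <= 1] in
  let k := Num.sqrt (2 * eta0) / (1 - eta0) in
  let Z := 1 - 2 * eta0 / lam * ln (1 - eps_cov) in
  let q_max := Num.min 1 (2 * delta / Num.sqrt n%:R * k *
                          Num.sqrt ((Z ^+ 2 - 1) / (4 * eta0))) in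
  let R_max := Num.max (1 - entropy (pvec eta0 (- lam^-1 * ln eps_rel))) 0 in
  feasible q_max R_max /\
  (forall q r : R, feasible q r -> q * r <= q_max * R_max).
Proof.
move=> n_gt0 delta_gt0 eta01 lam_gt0 /andP[eps_cov_gt0 eps_cov_lt1] eps_rel01.
move=> P feasible k Z q_max R_max.
set a := 2 * delta / Num.sqrt n%:R.
have a_gt0 : 0 < a by rewrite divr_gt0 ?sqrtr_gt0 ?ltr0n // mulr_gt0.
set ts := - lam^-1 * ln (1 - eps_cov).
have [ts_gt0 ets] : 0 < ts /\ expR (- lam * ts) = 1 - eps_cov.
  by apply: exponential_tail_level => //; apply/andP; split; lra.
have [ss_gt0 ess] := exponential_tail_level lam_gt0 eps_rel01.
have q_maxE : q_max = Num.min 1 (a * c_cov eta0 ts).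
  have Z_ts : Z = 1 + 2 * eta0 * ts by rewrite /Z /ts; field; rewrite gt_eqF.
  by rewrite /q_max /k Z_ts -mulrA -c_covE //; case/andP: eta01.
have cov_iff q : (P [set nB | (a * c_cov eta0 nB < q)%R] <= eps_cov%:E)%E <->
                 q <= a * c_cov eta0 ts.
  have -> : eps_cov = 1 - expR (- lam * ts) by rewrite ets; ring.
  exact: exponential_c_cov_sublevelP.
have rel_iff r : (P [set nB | (R_ach eta0 nB < r)%R] <= eps_rel%:E)%E <-> r <= R_max.
  by rewrite -ess; exact: exponential_R_ach_sublevelP.
have q_max01 : 0 <= q_max <= 1.
  rewrite q_maxE ge_min lexx le_min ler01 mulr_ge0 ?c_cov_ge0 ?(ltW a_gt0) //.
  by case/andP: eta01.
have R_max01 : 0 <= R_max <= 1.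
  by rewrite le_max lexx orbT R_ach_le1 // ltW.
split.
  rewrite /feasible -/a; split=> //; last exact/rel_iff.
  by apply/cov_iff; rewrite q_maxE ge_min lexx orbT.
move=> q r [/cov_iff q_le /rel_iff r_le /andP[q0 q1] /andP[r0 _]].
by apply: ler_pM => //; rewrite q_maxE le_min q1.
Qed.
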